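(* Let $d\ge2$, $\kappa,l>0$ and $V(\phi)=-\frac{d(d-1)}{2\kappa^2l^2}\cosh\big(\frac23\sqrt{\frac{d\kappa^2}{d-1}}\phi\big)$. Let $\rho=\tanh\big(\frac23\sqrt{\frac{d\kappa^2}{d-1}}\phi\big)$, $\psi=\sqrt{\frac{d\kappa^2}{d-1}}\phi$, and for $\nu\ge-1$ let $$W(\phi;\nu)=-\frac{d-1}{\kappa^2l}\frac{1}{(1-\rho^2)^{3/4}}\frac{1-\rho^2+\sqrt{1+2\nu\rho+\rho^2}}{\sqrt{2\big(1+\nu\rho+\sqrt{1+2\nu\rho+\rho^2}\big)}}.$$ Then: (i) for every $\nu\ge-1$, $W(\phi;\nu)=-\frac{d-1}{\kappa^2l}\big(1+\frac16\psi^2+\frac1{27}\nu\psi^3+O(\psi^4)\big)$ as $\phi\to0$; (ii) for every $\phi>0$, $\lim_{\nu\to\infty}W(\phi;\nu)=W_\infty(\phi):=-\frac{d-1}{\kappa^2l}(1-\rho^2)^{-3/4}$; (iii) $W_\infty$ satisfies $V=\frac12\big(W_\infty'^2-\frac{d\kappa^2}{d-1}W_\infty^2\big)$ and $W_\infty=-\frac{d-1}{\kappa^2l}\big(1+\frac13\psi^2+O(\psi^4)\big)$. In particular (with $m^2l^2=-2d^2/9$, $\Delta_-=d/3$, $\Delta_+=2d/3$), each $W(\cdot;\nu)$ with finite $\nu$ has leading behaviour $-\frac{d-1}{\kappa^2l}-\frac{\Delta_-}{2l}\phi^2$, whereas $W_\infty$ has leading behaviour $-\frac{d-1}{\kappa^2l}-\frac{\Delta_+}{2l}\phi^2$.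 *)

From Stdlib Require Import Reals Lra.
From Coquelicot Require Import Coquelicot.
Open Scope R_scope.

Definition cK (d : nat) (kappa : R) : R := sqrt (INR d * kappa ^ 2 / (INR d - 1)).

Definition Vpot (d : nat) (kappa l phi : R) : R :=
  - (INR d * (INR d - 1)) / (2 * kappa ^ 2 * l ^ 2) * cosh (2 / 3 * cK d kappa * phi).

Definition rho (d : nat) (kappa phi : R) : R := tanh (2 / 3 * cK d kappa * phi).
Definition psi (d : nat) (kappa phi : R) : R := cK d kappa * phi.

Definition Wsup (d : nat) (kappa l nu phi : R) : R :=
  let r := rho d kappa phi in
  let s := sqrt (1 + 2 * nu * r + r ^ 2) in
  - (INR d - 1) / (kappa ^ 2 * l)
  * / Rpower (1 - r ^ 2) (3 / 4)
  * ((1 - r ^ 2 + s) / sqrt (2 * (1 + nu * r + s))).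

Definition Winf (d : nat) (kappa l phi : R) : R :=
  let r := rho d kappa phi in
  - (INR d - 1) / (kappa ^ 2 * l) * Rpower (1 - r ^ 2) (- (3 / 4)).

Definition bigO0 (f g : R -> R) : Prop :=
  exists C delta : R, 0 < delta /\
    forall x : R, Rabs x < delta -> Rabs (f x) <= C * Rabs (g x).

(* conformal dimensions for m^2 l^2 = -2 d^2 / 9 *)
Definition Delta_minus (d : nat) : R := INR d / 3.
Definition Delta_plus (d : nat) : R := 2 * INR d / 3.

(* Put c = sqrt (d kappa^2 / (d - 1)), k = 2 c / 3 and A = - (d - 1) / (kappa^2 l).  Since
   1 - tanh^2 = 1 / cosh^2, W(phi; nu) = A cosh(k phi)^(3/2) Wratio nu (tanh (k phi)), where
   Wratio is the ratio of radicals in W, and W_infty(phi) = A cosh(k phi)^(3/2).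

   The small-field expansions are computed with third-order jets (Taylor polynomials with an
   O(t^4) remainder), which are stable under sums, products, square roots and inverses of
   functions not vanishing at 0.  Starting from the jets of exp(+-t) (Taylor-Lagrange) this
   gives cosh^(3/2) = 1 + 3/4 t^2 + O(t^4) and
   cosh^(3/2) (Wratio nu o tanh) = 1 + 3/8 t^2 + nu/8 t^3 + O(t^4).

   For fixed r = tanh (k phi) in (0, 1), the squares of the numerator and denominator of
   Wratio nu r differ by r^2 (1 - r^2 + 2 sqrt(...)) = O(sqrt nu), whereas both are of order
   nu; hence Wratio nu r = 1 + O(nu^(-1/2)).  Finally cosh^2 - sinh^2 = 1 turns
   W_infty'^2 - c^2 W_infty^2 into - A^2 c^2 cosh(k phi), which is 2 V. *)

From Stdlib Require Import Reals Lra Psatz.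
From Coquelicot Require Import Coquelicot.
Open Scope R_scope.

(** * Landau estimates at zero *)

Section BigOAtZero.

Implicit Types f g h u : R -> R.

Lemma bigO0_ext f g h : (forall x, f x = g x) -> bigO0 f h -> bigO0 g h.
Proof.
intros E [C [delta [Hdelta H]]]; exists C, delta; split; [exact Hdelta|].
intros x Hx; rewrite <- E; auto.
Qed.

Lemma bigO0_ext_r f g h : (forall x, g x = h x) -> bigO0 f g -> bigO0 f h.
Proof.
intros E [C [delta [Hdelta H]]]; exists C, delta; split; [exact Hdelta|].
intros x Hx; rewrite <- E; auto.
Qed.

Lemma bigO0_nonneg f g : bigO0 f g ->
  exists C delta, 0 <= C /\ 0 < delta /\
    forall x, Rabs x < delta -> Rabs (f x) <= C * Rabs (g x).
Proof.
intros [C [delta [Hdelta H]]]; exists (Rmax C 0), delta.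
repeat split; [apply Rmax_r | exact Hdelta |].
intros x Hx; eapply Rle_trans; [now apply H|].
apply Rmult_le_compat_r; [apply Rabs_pos | apply Rmax_l].
Qed.

Lemma bigO0_refl f : bigO0 f f.
Proof. exists 1, 1; split; [lra|]; intros; lra. Qed.

Lemma bigO0_trans f g h : bigO0 f g -> bigO0 g h -> bigO0 f h.
Proof.
intros Hfg Hgh.
destruct (bigO0_nonneg _ _ Hfg) as [C1 [d1 [HC1 [Hd1 H1]]]].
destruct Hgh as [C2 [d2 [Hd2 H2]]].
exists (C1 * C2), (Rmin d1 d2); split; [now apply Rmin_pos|].
intros x Hx.
assert (Hx1 : Rabs x < d1) by (eapply Rlt_le_trans; [exact Hx | apply Rmin_l]).
assert (Hx2 : Rabs x < d2) by (eapply Rlt_le_trans; [exact Hx | apply Rmin_r]).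
rewrite Rmult_assoc; eapply Rle_trans; [now apply H1|].
apply Rmult_le_compat_l; auto.
Qed.

Lemma bigO0_add f g h : bigO0 f h -> bigO0 g h -> bigO0 (fun x => f x + g x) h.
Proof.
intros Hf Hg.
destruct (bigO0_nonneg _ _ Hf) as [C1 [d1 [_ [Hd1 H1]]]].
destruct (bigO0_nonneg _ _ Hg) as [C2 [d2 [_ [Hd2 H2]]]].
exists (C1 + C2), (Rmin d1 d2); split; [now apply Rmin_pos|].
intros x Hx.
assert (Hx1 : Rabs x < d1) by (eapply Rlt_le_trans; [exact Hx | apply Rmin_l]).
assert (Hx2 : Rabs x < d2) by (eapply Rlt_le_trans; [exact Hx | apply Rmin_r]).
specialize (H1 x Hx1); specialize (H2 x Hx2).
eapply Rle_trans; [apply Rabs_triang | lra].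
Qed.

Lemma bigO0_mul_bounded u f h : bigO0 u (fun _ => 1) -> bigO0 f h ->
  bigO0 (fun x => u x * f x) h.
Proof.
intros Hu Hf.
destruct (bigO0_nonneg _ _ Hu) as [M [d1 [HM [Hd1 H1]]]].
destruct (bigO0_nonneg _ _ Hf) as [C [d2 [HC [Hd2 H2]]]].
exists (M * C), (Rmin d1 d2); split; [now apply Rmin_pos|].
intros x Hx.
assert (Hx1 : Rabs x < d1) by (eapply Rlt_le_trans; [exact Hx | apply Rmin_l]).
assert (Hx2 : Rabs x < d2) by (eapply Rlt_le_trans; [exact Hx | apply Rmin_r]).
specialize (H1 x Hx1); rewrite Rabs_R1, Rmult_1_r in H1.
rewrite Rabs_mult, Rmult_assoc.
apply Rmult_le_compat; auto using Rabs_pos.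
Qed.

Lemma bigO0_scal k f h : bigO0 f h -> bigO0 (fun x => k * f x) h.
Proof.
apply bigO0_mul_bounded; exists (Rabs k), 1; split; [lra|].
intros; rewrite Rabs_R1; lra.
Qed.

Lemma bigO0_comp_scal k f g : bigO0 f g ->
  bigO0 (fun x => f (k * x)) (fun x => g (k * x)).
Proof.
intros [C [delta [Hdelta H]]].
exists C, (delta / (Rabs k + 1)); split.
{ apply Rdiv_lt_0_compat; [exact Hdelta|]; pose proof (Rabs_pos k); lra. }
intros x Hx; apply H.
pose proof (Rabs_pos k) as Hk; pose proof (Rabs_pos x) as Hx0.
rewrite Rabs_mult.
apply (Rmult_lt_compat_l (Rabs k + 1)) in Hx; [|lra].
replace ((Rabs k + 1) * (delta / (Rabs k + 1))) with delta in Hx by (field; lra).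
nra.
Qed.

Lemma bigO0_pow_le m n : (m <= n)%nat -> bigO0 (fun x => x ^ n) (fun x => x ^ m).
Proof.
intros Hmn; exists 1, 1; split; [lra|]; intros x Hx.
replace n with (m + (n - m))%nat by lia.
rewrite pow_add, Rabs_mult, Rmult_1_l.
assert (Hpow : Rabs (x ^ (n - m)) <= 1).
{ rewrite <- RPow_abs, <- (pow1 (n - m)).
  apply pow_incr; split; [apply Rabs_pos | lra]. }
pose proof (Rabs_pos (x ^ m)); nra.
Qed.

Lemma bigO0_id_small f L : bigO0 (fun x => f x - L) (fun x => x) ->
  forall eps, 0 < eps -> exists delta, 0 < delta /\
    forall x, Rabs x < delta -> Rabs (f x - L) < eps.
Proof.
intros Hf eps Heps.
destruct (bigO0_nonneg _ _ Hf) as [C [d1 [HC [Hd1 H1]]]].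
exists (Rmin d1 (eps / (C + 1))); split.
{ apply Rmin_pos; [exact Hd1 | apply Rdiv_lt_0_compat; lra]. }
intros x Hx.
assert (Hx1 : Rabs x < d1) by (eapply Rlt_le_trans; [exact Hx | apply Rmin_l]).
assert (Hx2 : Rabs x < eps / (C + 1)) by (eapply Rlt_le_trans; [exact Hx | apply Rmin_r]).
apply (Rmult_lt_compat_l (C + 1)) in Hx2; [|lra].
replace ((C + 1) * (eps / (C + 1))) with eps in Hx2 by (field; lra).
specialize (H1 x Hx1); pose proof (Rabs_pos x); nra.
Qed.

Lemma bigO0_comp_scal_pow k c n f : c <> 0 -> bigO0 f (fun t => t ^ n) ->
  bigO0 (fun x => f (k * x)) (fun x => (c * x) ^ n).
Proof.
intros Hc Hf; apply (bigO0_trans _ _ _ (bigO0_comp_scal k _ _ Hf)).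
apply (bigO0_ext (fun x => (k / c) ^ n * (c * x) ^ n)).
- intros x; rewrite <- Rpow_mult_distr; f_equal; field; exact Hc.
- apply bigO0_scal, bigO0_refl.
Qed.

End BigOAtZero.

(** * Third-order jets *)

Record jet := Jet { jet0 : R; jet1 : R; jet2 : R; jet3 : R }.

Definition jet_poly (a : jet) (t : R) : R :=
  jet0 a + jet1 a * t + jet2 a * t ^ 2 + jet3 a * t ^ 3.

Definition is_jet (f : R -> R) (a : jet) : Prop :=
  bigO0 (fun t => f t - jet_poly a t) (fun t => t ^ 4).

Definition jet_add (a b : jet) : jet :=
  Jet (jet0 a + jet0 b) (jet1 a + jet1 b) (jet2 a + jet2 b) (jet3 a + jet3 b).

Definition jet_scal (k : R) (a : jet) : jet :=
  Jet (k * jet0 a) (k * jet1 a) (k * jet2 a) (k * jet3 a).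

Definition jet_mul (a b : jet) : jet :=
  Jet (jet0 a * jet0 b)
      (jet0 a * jet1 b + jet1 a * jet0 b)
      (jet0 a * jet2 b + jet1 a * jet1 b + jet2 a * jet0 b)
      (jet0 a * jet3 b + jet1 a * jet2 b + jet2 a * jet1 b + jet3 a * jet0 b).

(* The coefficients of t^4, ..., t^6 that [jet_mul] truncates. *)
Definition jet_mul_tail (a b : jet) : jet :=
  Jet (jet1 a * jet3 b + jet2 a * jet2 b + jet3 a * jet1 b)
      (jet2 a * jet3 b + jet3 a * jet2 b) (jet3 a * jet3 b) 0.

(* Solve [jet_mul b b = a] coefficient by coefficient, given the root [b0]. *)
Definition jet_sqrt (a : jet) (b0 : R) : jet :=
  let b1 := jet1 a / (2 * b0) in
  let b2 := (jet2 a - b1 ^ 2) / (2 * b0) in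
  let b3 := (jet3 a - 2 * b1 * b2) / (2 * b0) in
  Jet b0 b1 b2 b3.

Definition jet_inv (b : jet) : jet :=
  let c0 := / jet0 b in
  let c1 := - (c0 * jet1 b) / jet0 b in
  let c2 := - (c0 * jet2 b + c1 * jet1 b) / jet0 b in
  let c3 := - (c0 * jet3 b + c1 * jet2 b + c2 * jet1 b) / jet0 b in
  Jet c0 c1 c2 c3.

Lemma jet_polyD a b t : jet_poly (jet_add a b) t = jet_poly a t + jet_poly b t.
Proof. unfold jet_poly; simpl; ring. Qed.

Lemma jet_polyZ k a t : jet_poly (jet_scal k a) t = k * jet_poly a t.
Proof. unfold jet_poly; simpl; ring. Qed.

Lemma jet_polyM a b t :
  jet_poly a t * jet_poly b t = jet_poly (jet_mul a b) t + t ^ 4 * jet_poly (jet_mul_tail a b) t.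
Proof. unfold jet_poly; simpl; ring. Qed.

Lemma jet_mul_sqrt a b0 : 0 < b0 -> b0 * b0 = jet0 a ->
  jet_mul (jet_sqrt a b0) (jet_sqrt a b0) = a.
Proof.
intros Hb0 E; destruct a as [x y z w]; simpl in E.
unfold jet_mul, jet_sqrt; simpl; f_equal; [lra | field; lra ..].
Qed.

Lemma jet_mul_inv b : jet0 b <> 0 -> jet_mul (jet_inv b) b = Jet 1 0 0 0.
Proof.
intros Hb; destruct b as [x y z w]; simpl in Hb.
unfold jet_mul, jet_inv; simpl; f_equal; field; exact Hb.
Qed.

Lemma jet_poly_bounded a : bigO0 (jet_poly a) (fun _ => 1).
Proof.
exists (Rabs (jet0 a) + Rabs (jet1 a) + Rabs (jet2 a) + Rabs (jet3 a)), 1.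
split; [lra|]; intros t Ht; rewrite Rabs_R1, Rmult_1_r; unfold jet_poly.
assert (Hpow : forall n, Rabs (t ^ n) <= 1).
{ intros n; rewrite <- RPow_abs, <- (pow1 n).
  apply pow_incr; split; [apply Rabs_pos | lra]. }
assert (Hterm : forall c n, Rabs (c * t ^ n) <= Rabs c).
{ intros c n; rewrite Rabs_mult; specialize (Hpow n).
  pose proof (Rabs_pos c); nra. }
pose proof (Hterm (jet1 a) 1%nat) as H1; rewrite pow_1 in H1.
pose proof (Hterm (jet2 a) 2%nat); pose proof (Hterm (jet3 a) 3%nat).
pose proof (Rabs_triang (jet0 a + jet1 a * t + jet2 a * t ^ 2) (jet3 a * t ^ 3)).
pose proof (Rabs_triang (jet0 a + jet1 a * t) (jet2 a * t ^ 2)).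
pose proof (Rabs_triang (jet0 a) (jet1 a * t)).
lra.
Qed.

Lemma is_jet_ext f g a : (forall t, f t = g t) -> is_jet f a -> is_jet g a.
Proof. intros E; apply bigO0_ext; intros t; now rewrite E. Qed.

Lemma is_jet_eq f a x y z w : is_jet f a ->
  jet0 a = x -> jet1 a = y -> jet2 a = z -> jet3 a = w -> is_jet f (Jet x y z w).
Proof. destruct a; simpl; intros; subst; assumption. Qed.

Lemma is_jet_poly_exact f a : (forall t, f t = jet_poly a t) -> is_jet f a.
Proof.
intros E; exists 0, 1; split; [lra|]; intros t _.
rewrite E, Rminus_diag, Rabs_R0; lra.
Qed.

Lemma is_jet_bounded f a : is_jet f a -> bigO0 f (fun _ => 1).
Proof.
intros Hf.
apply (bigO0_ext (fun t => (f t - jet_poly a t) + jet_poly a t)); [intros; ring|].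
apply bigO0_add; [|apply jet_poly_bounded].
exact (bigO0_trans _ _ _ Hf (bigO0_pow_le 0 4 ltac:(lia))).
Qed.

Lemma is_jet_sub_jet0 f a : is_jet f a -> bigO0 (fun t => f t - jet0 a) (fun t => t).
Proof.
intros Hf.
apply (bigO0_ext (fun t => (f t - jet_poly a t)
  + t * jet_poly (Jet (jet1 a) (jet2 a) (jet3 a) 0) t)).
{ intros t; unfold jet_poly; simpl; ring. }
apply bigO0_add.
- apply (bigO0_trans _ _ _ Hf), (bigO0_ext_r _ (fun t => t ^ 1)); [apply pow_1|].
  apply bigO0_pow_le; lia.
- apply (bigO0_ext (fun t => jet_poly (Jet (jet1 a) (jet2 a) (jet3 a) 0) t * t));
    [intros; ring|].
  apply bigO0_mul_bounded; [apply jet_poly_bounded | apply bigO0_refl].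
Qed.

Lemma is_jet_near0 f a : is_jet f a ->
  forall eps, 0 < eps -> exists delta, 0 < delta /\
    forall t, Rabs t < delta -> Rabs (f t - jet0 a) < eps.
Proof. intros Hf; apply bigO0_id_small, is_jet_sub_jet0, Hf. Qed.

Lemma is_jet_const c : is_jet (fun _ => c) (Jet c 0 0 0).
Proof. apply is_jet_poly_exact; intros; unfold jet_poly; simpl; ring. Qed.

Lemma is_jet_add f g a b : is_jet f a -> is_jet g b ->
  is_jet (fun t => f t + g t) (jet_add a b).
Proof.
intros Hf Hg; apply (bigO0_ext (fun t => (f t - jet_poly a t) + (g t - jet_poly b t))).
- intros t; rewrite jet_polyD; ring.
- now apply bigO0_add.
Qed.

Lemma is_jet_scal k f a : is_jet f a -> is_jet (fun t => k * f t) (jet_scal k a).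
Proof.
intros Hf; apply (bigO0_ext (fun t => k * (f t - jet_poly a t))).
- intros t; rewrite jet_polyZ; ring.
- now apply bigO0_scal.
Qed.

Lemma is_jet_mul f g a b : is_jet f a -> is_jet g b ->
  is_jet (fun t => f t * g t) (jet_mul a b).
Proof.
intros Hf Hg.
apply (bigO0_ext (fun t => f t * (g t - jet_poly b t)
  + (jet_poly b t * (f t - jet_poly a t) + jet_poly (jet_mul_tail a b) t * t ^ 4))).
{ intros t; pose proof (jet_polyM a b t); lra. }
apply bigO0_add; [apply bigO0_mul_bounded; [exact (is_jet_bounded _ _ Hf) | exact Hg]|].
apply bigO0_add; apply bigO0_mul_bounded;
  auto using jet_poly_bounded, bigO0_refl.
Qed.

Lemma is_jet_leading f a : is_jet f a ->
  bigO0 (fun t => f t - (jet0 a + jet1 a * t + jet2 a * t ^ 2)) (fun t => t ^ 3).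
Proof.
intros Hf; apply (bigO0_ext (fun t => (f t - jet_poly a t) + jet3 a * t ^ 3)).
{ intros t; unfold jet_poly; ring. }
apply bigO0_add; [exact (bigO0_trans _ _ _ Hf (bigO0_pow_le 3 4 ltac:(lia)))|].
apply bigO0_scal, bigO0_refl.
Qed.

Lemma Rabs_sqrt_sub_le x q : 0 < q -> Rabs (sqrt x - q) <= Rabs (x - q ^ 2) / q.
Proof.
intros Hq; destruct (Rle_or_lt 0 x) as [Hx | Hx].
- pose proof (sqrt_pos x); pose proof (sqrt_sqrt x Hx).
  replace (x - q ^ 2) with ((sqrt x - q) * (sqrt x + q)) by nra.
  rewrite Rabs_mult, (Rabs_right (sqrt x + q)) by lra.
  assert (1 <= (sqrt x + q) / q).
  { apply (Rmult_le_reg_r q); [lra|]; unfold Rdiv; rewrite Rmult_assoc, Rinv_l; lra. }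
  unfold Rdiv in *; rewrite Rmult_assoc; pose proof (Rabs_pos (sqrt x - q)); nra.
- rewrite sqrt_neg_0, Rminus_0_l, Rabs_Ropp, Rabs_right, Rabs_left by nra.
  apply (Rmult_le_reg_r q); [lra|].
  unfold Rdiv; rewrite Rmult_assoc, Rinv_l by lra; nra.
Qed.

Lemma is_jet_sqrt f a b0 : is_jet f a -> 0 < b0 -> b0 * b0 = jet0 a ->
  is_jet (fun t => sqrt (f t)) (jet_sqrt a b0).
Proof.
intros Hf Hb0 Ea; set (b := jet_sqrt a b0).
assert (Hsq : forall t, jet_poly b t ^ 2 = jet_poly a t + t ^ 4 * jet_poly (jet_mul_tail b b) t).
{ intros t; replace (jet_poly b t ^ 2) with (jet_poly b t * jet_poly b t) by ring; rewrite jet_polyM; unfold b; now rewrite jet_mul_sqrt. }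
apply (bigO0_trans _ (fun t => f t - jet_poly b t ^ 2)).
- destruct (is_jet_near0 (jet_poly b) b (is_jet_poly_exact _ _ (fun _ => eq_refl)) (b0 / 2))
    as [delta [Hdelta Hnear]]; [lra|].
  exists (2 / b0), delta; split; [exact Hdelta|]; intros t Ht.
  specialize (Hnear t Ht); apply Rabs_def2 in Hnear; simpl in Hnear.
  eapply Rle_trans; [apply Rabs_sqrt_sub_le; lra|].
  assert (/ jet_poly b t <= 2 / b0).
  { replace (2 / b0) with (/ (b0 / 2)) by (field; lra).
    apply Rinv_le_contravar; lra. }
  unfold Rdiv at 1; pose proof (Rabs_pos (f t - jet_poly b t ^ 2)); nra.
- apply (bigO0_ext (fun t => (f t - jet_poly a t) + -1 * (jet_poly (jet_mul_tail b b) t * t ^ 4))).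
  { intros t; rewrite Hsq; ring. }
  apply bigO0_add; [exact Hf|].
  apply bigO0_scal, bigO0_mul_bounded; [apply jet_poly_bounded | apply bigO0_refl].
Qed.

Lemma is_jet_inv g b : is_jet g b -> jet0 b <> 0 -> is_jet (fun t => / g t) (jet_inv b).
Proof.
intros Hg Hb0; set (c := jet_inv b); set (m := Rabs (jet0 b)).
assert (Hm : 0 < m) by (apply Rabs_pos_lt, Hb0).
apply (bigO0_trans _ (fun t => 1 - jet_poly c t * g t)).
- destruct (is_jet_near0 g b Hg (m / 2)) as [delta [Hdelta Hnear]]; [lra|].
  exists (2 / m), delta; split; [exact Hdelta|]; intros t Ht.
  specialize (Hnear t Ht).
  assert (Hgt : m / 2 <= Rabs (g t)).
  { pose proof (Rabs_triang_inv (jet0 b) (jet0 b - g t)) as Htri.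
    replace (jet0 b - (jet0 b - g t)) with (g t) in Htri by ring.
    rewrite Rabs_minus_sym in Htri; fold m in Htri; lra. }
  assert (Hg0 : g t <> 0) by (intros Z; rewrite Z, Rabs_R0 in Hgt; lra).
  replace (/ g t - jet_poly c t) with ((1 - jet_poly c t * g t) * / g t) by (field; exact Hg0).
  rewrite Rabs_mult, Rabs_inv, Rmult_comm.
  apply Rmult_le_compat_r; [apply Rabs_pos|].
  replace (2 / m) with (/ (m / 2)) by (field; lra).
  apply Rinv_le_contravar; lra.
- apply (bigO0_ext (fun t => -1 * (jet_poly (jet_mul_tail c b) t * t ^ 4)
    + jet_poly c t * (-1 * (g t - jet_poly b t)))).
  { intros t; pose proof (jet_polyM c b t) as M; unfold c in M |- *.
    rewrite jet_mul_inv in M by exact Hb0.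
    replace (jet_poly (Jet 1 0 0 0) t) with 1 in M by (unfold jet_poly; simpl; ring).
    symmetry; transitivity (1 - jet_poly (jet_inv b) t * jet_poly b t
      - jet_poly (jet_inv b) t * (g t - jet_poly b t)); [ring | rewrite M; ring]. }
  apply bigO0_add.
  + apply bigO0_scal, bigO0_mul_bounded; [apply jet_poly_bounded | apply bigO0_refl].
  + apply bigO0_mul_bounded; [apply jet_poly_bounded | apply bigO0_scal, Hg].
Qed.

(** * Exponential and hyperbolic functions *)

Lemma Derive_n_exp_scal c n x :
  Derive_n (fun u => exp (c * u)) n x = c ^ n * exp (c * x).
Proof.
revert x; induction n as [|n IH]; intros x; simpl; [ring|].
rewrite (Derive_ext _ (fun u => c ^ n * exp (c * u))) by exact IH.
apply is_derive_unique; auto_derive; [exact I | ring].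
Qed.

Lemma ex_derive_n_exp_scal c n x : ex_derive_n (fun u => exp (c * u)) n x.
Proof.
destruct n as [|n]; [exact I|]; simpl.
apply (ex_derive_ext (fun u => c ^ n * exp (c * u))).
- intros; symmetry; apply Derive_n_exp_scal.
- auto_derive; exact I.
Qed.

Definition jet_exp (c : R) : jet := Jet 1 c (c ^ 2 / 2) (c ^ 3 / 6).

Lemma exp_scal_taylor_pos c s : 0 < s < 1 ->
  Rabs (exp (c * s) - jet_poly (jet_exp c) s) <= c ^ 4 * exp (Rabs c) / 24 * s ^ 4.
Proof.
intros Hs.
destruct (Taylor_Lagrange (fun u => exp (c * u)) 3 0 s (proj1 Hs)) as [z [Hz E]].
{ intros; apply ex_derive_n_exp_scal. }
cbn [sum_f_R0] in E; rewrite !Derive_n_exp_scal, Rmult_0_r, exp_0 in E.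
simpl Factorial.fact in E; simpl INR in E.
replace (exp (c * s) - jet_poly (jet_exp c) s) with (c ^ 4 * exp (c * z) / 24 * s ^ 4)
  by (rewrite E; unfold jet_poly, jet_exp; simpl; field).
assert (Hcz : exp (c * z) <= exp (Rabs c)).
{ assert (Hle : c * z <= Rabs c).
  { destruct (Rle_or_lt 0 c); [rewrite Rabs_right | rewrite Rabs_left]; nra. }
  destruct Hle as [Hlt | ->]; [left; apply exp_increasing, Hlt | right; reflexivity]. }
assert (0 <= c ^ 4) by (replace (c ^ 4) with ((c ^ 2) ^ 2) by ring; apply pow2_ge_0).
assert (0 <= s ^ 4) by (apply pow_le; lra).
rewrite Rabs_right; [|apply Rle_ge, Rmult_le_pos; [|lra]; unfold Rdiv;
  apply Rmult_le_pos; [apply Rmult_le_pos; [lra| left; apply exp_pos] | lra]].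
unfold Rdiv; apply Rmult_le_compat_r; [lra|]; apply Rmult_le_compat_r; [lra|].
apply Rmult_le_compat_l; lra.
Qed.

Lemma is_jet_exp_scal c : is_jet (fun t => exp (c * t)) (jet_exp c).
Proof.
exists (c ^ 4 * exp (Rabs c) / 24), 1; split; [lra|]; intros t Ht.
assert (Ht4 : Rabs (t ^ 4) = t ^ 4)
  by (apply Rabs_right; replace (t ^ 4) with ((t ^ 2) ^ 2) by ring; apply Rle_ge, pow2_ge_0).
rewrite Ht4; apply Rabs_def2 in Ht.
destruct (Rtotal_order t 0) as [Hneg | [Hzero | Hpos]].
- pose proof (exp_scal_taylor_pos (- c) (- t) ltac:(lra)) as H.
  replace (- c * - t) with (c * t) in H by ring.
  replace (jet_poly (jet_exp (- c)) (- t)) with (jet_poly (jet_exp c) t) in H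
    by (unfold jet_poly, jet_exp; simpl; field).
  now replace ((- c) ^ 4) with (c ^ 4) in H by ring;
    replace ((- t) ^ 4) with (t ^ 4) in H by ring; rewrite Rabs_Ropp in H.
- subst t; rewrite Rmult_0_r, exp_0.
  replace (1 - jet_poly (jet_exp c) 0) with 0 by (unfold jet_poly; simpl; ring).
  rewrite Rabs_R0; simpl; lra.
- apply exp_scal_taylor_pos; lra.
Qed.

Ltac jet_field :=
  unfold jet_add, jet_scal, jet_mul, jet_sqrt, jet_inv, jet_exp;
  cbn [jet0 jet1 jet2 jet3]; field.

Lemma is_jet_cosh : is_jet cosh (Jet 1 0 (/ 2) 0).
Proof.
pose proof (is_jet_scal (/ 2) _ _
  (is_jet_add _ _ _ _ (is_jet_exp_scal 1) (is_jet_exp_scal (-1)))) as H.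
eapply is_jet_eq; [eapply is_jet_ext; [|exact H] | jet_field ..].
intros t; unfold cosh; replace (1 * t) with t by ring; replace (-1 * t) with (- t) by ring; field.
Qed.

Lemma is_jet_sinh : is_jet sinh (Jet 0 1 0 (/ 6)).
Proof.
pose proof (is_jet_scal (/ 2) _ _ (is_jet_add _ _ _ _
  (is_jet_exp_scal 1) (is_jet_scal (-1) _ _ (is_jet_exp_scal (-1))))) as H.
eapply is_jet_eq; [eapply is_jet_ext; [|exact H] | jet_field ..].
intros t; unfold sinh; replace (1 * t) with t by ring; replace (-1 * t) with (- t) by ring; field.
Qed.

Lemma is_jet_tanh : is_jet tanh (Jet 0 1 0 (- / 3)).
Proof.
pose proof (is_jet_mul _ _ _ _ is_jet_sinh
  (is_jet_inv _ _ is_jet_cosh ltac:(simpl; lra))) as H.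
eapply is_jet_eq; [eapply is_jet_ext; [|exact H] | jet_field ..].
reflexivity.
Qed.

Lemma cosh_pos x : 0 < cosh x.
Proof. unfold cosh; pose proof (exp_pos x); pose proof (exp_pos (- x)); lra. Qed.

Lemma cosh2_sub_sinh2 x : cosh x ^ 2 - sinh x ^ 2 = 1.
Proof.
unfold cosh, sinh.
assert (exp x * exp (- x) = 1) by (rewrite <- exp_plus, Rplus_opp_r; apply exp_0).
nra.
Qed.

Lemma tanh_pos_lt1 x : 0 < x -> 0 < tanh x < 1.
Proof.
intros Hx; unfold tanh, sinh, cosh.
pose proof (exp_pos (- x)); assert (exp (- x) < exp x) by (apply exp_increasing; lra).
split; [apply Rdiv_lt_0_compat; lra|].
apply (Rmult_lt_reg_r ((exp x + exp (- x)) / 2)); [lra|].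
unfold Rdiv; rewrite Rmult_assoc, Rinv_l by lra; lra.
Qed.

Lemma one_sub_tanh2 x : 1 - tanh x ^ 2 = / cosh x ^ 2.
Proof.
pose proof (cosh_pos x); pose proof (cosh2_sub_sinh2 x).
unfold tanh.
replace (1 - (sinh x / cosh x) ^ 2) with ((cosh x ^ 2 - sinh x ^ 2) / cosh x ^ 2) by (field; lra).
rewrite H0; field; lra.
Qed.

(** * The profiles [cosh^(3/2)] and [Wratio] *)

Definition cosh32 (t : R) : R := cosh t * sqrt (cosh t).

Lemma is_jet_cosh32 : is_jet cosh32 (Jet 1 0 (3 / 4) 0).
Proof.
pose proof (is_jet_mul _ _ _ _ is_jet_cosh
  (is_jet_sqrt _ _ 1 is_jet_cosh ltac:(lra) ltac:(simpl; ring))) as H.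
eapply is_jet_eq; [exact H | jet_field ..].
Qed.

Definition Wratio (nu r : R) : R :=
  let s := sqrt (1 + 2 * nu * r + r ^ 2) in
  (1 - r ^ 2 + s) / sqrt (2 * (1 + nu * r + s)).

Lemma is_jet_Wratio_tanh nu :
  is_jet (fun t => Wratio nu (tanh t)) (Jet 1 0 (- 3 / 8) (nu / 8)).
Proof.
pose proof is_jet_tanh as Htanh.
assert (Htanh2 : is_jet (fun t => tanh t ^ 2) (Jet 0 0 1 0)).
{ eapply is_jet_eq; [eapply is_jet_ext; [|exact (is_jet_mul _ _ _ _ Htanh Htanh)] | jet_field ..].
  intros; simpl; ring. }
assert (Hdisc : is_jet (fun t => 1 + 2 * nu * tanh t + tanh t ^ 2)
                       (Jet 1 (2 * nu) 1 (- 2 * nu / 3))).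
{ eapply is_jet_eq; [exact (is_jet_add _ _ _ _ (is_jet_add _ _ _ _ (is_jet_const 1)
    (is_jet_scal (2 * nu) _ _ Htanh)) Htanh2) | jet_field ..]. }
assert (Hs : is_jet (fun t => sqrt (1 + 2 * nu * tanh t + tanh t ^ 2))
    (Jet 1 nu ((1 - nu ^ 2) / 2) ((nu ^ 3 - 5 * nu / 3) / 2))).
{ eapply is_jet_eq; [exact (is_jet_sqrt _ _ 1 Hdisc ltac:(lra) ltac:(simpl; ring)) | jet_field ..]. }
assert (Hnum : is_jet (fun t => 1 - tanh t ^ 2 + sqrt (1 + 2 * nu * tanh t + tanh t ^ 2))
    (Jet 2 nu (- (1 + nu ^ 2) / 2) ((nu ^ 3 - 5 * nu / 3) / 2))).
{ eapply is_jet_eq; [eapply is_jet_ext; [|exact (is_jet_add _ _ _ _ (is_jet_add _ _ _ _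
    (is_jet_const 1) (is_jet_scal (-1) _ _ Htanh2)) Hs)] | jet_field ..].
  intros; cbv beta; ring. }
assert (Hden : is_jet (fun t => sqrt (2 * (1 + nu * tanh t + sqrt (1 + 2 * nu * tanh t + tanh t ^ 2))))
    (Jet 2 nu ((1 - 2 * nu ^ 2) / 4) (nu ^ 3 / 2 - 17 * nu / 24))).
{ pose proof (is_jet_scal 2 _ _ (is_jet_add _ _ _ _ (is_jet_add _ _ _ _
    (is_jet_const 1) (is_jet_scal nu _ _ Htanh)) Hs)) as H.
  eapply is_jet_eq; [exact (is_jet_sqrt _ _ 2 H ltac:(lra) ltac:(simpl; ring)) | jet_field ..]. }
pose proof (is_jet_mul _ _ _ _ Hnum (is_jet_inv _ _ Hden ltac:(simpl; lra))) as H.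
eapply is_jet_eq; [exact H | jet_field ..].
Qed.

Lemma is_jet_cosh32_Wratio nu :
  is_jet (fun t => cosh32 t * Wratio nu (tanh t)) (Jet 1 0 (3 / 8) (nu / 8)).
Proof.
eapply is_jet_eq; [exact (is_jet_mul _ _ _ _ is_jet_cosh32 (is_jet_Wratio_tanh nu)) | jet_field ..].
Qed.

Lemma inv_Rpower_one_sub_tanh2 x : / Rpower (1 - tanh x ^ 2) (3 / 4) = cosh32 x.
Proof.
pose proof (cosh_pos x) as Hc; rewrite one_sub_tanh2.
replace (/ cosh x ^ 2) with (Rpower (cosh x) (- (2)))
  by (rewrite Rpower_Ropp, <- (Rpower_pow 2) by lra; simpl INR; f_equal; f_equal; ring).
rewrite Rpower_mult; replace (- (2) * (3 / 4)) with (- (1 + / 2)) by field.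
rewrite Rpower_Ropp, Rinv_inv, Rpower_plus, Rpower_1, Rpower_sqrt by lra.
reflexivity.
Qed.

Lemma is_derive_cosh32 x : is_derive cosh32 x (3 / 2 * sinh x * sqrt (cosh x)).
Proof.
pose proof (cosh_pos x) as Hc.
assert (Hcosh : is_derive cosh x (sinh x)) by apply is_derive_Reals, derivable_pt_lim_cosh.
pose proof (is_derive_mult _ _ _ _ _ Hcosh (is_derive_sqrt _ _ _ Hcosh Hc) Rmult_comm) as H.
replace (3 / 2 * sinh x * sqrt (cosh x))
  with (plus (mult (sinh x) (sqrt (cosh x))) (mult (cosh x) (sinh x / (2 * sqrt (cosh x))))).
{ exact H. }
pose proof (sqrt_lt_R0 _ Hc) as Hq; pose proof (sqrt_sqrt _ (Rlt_le _ _ Hc)) as Hq2.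
unfold plus, mult; simpl; set (q := sqrt (cosh x)) in *; rewrite <- Hq2; field; lra.
Qed.

Lemma Wratio_sub1_le r nu : 0 < r < 1 -> 1 <= nu ->
  Rabs (Wratio nu r - 1) <= 5 / (2 * r * sqrt nu).
Proof.
intros Hr Hnu; unfold Wratio.
set (s := sqrt (1 + 2 * nu * r + r ^ 2)).
assert (Hs : 0 < s) by (apply sqrt_lt_R0; nra).
assert (Hs2 : s * s = 1 + 2 * nu * r + r ^ 2) by (apply sqrt_sqrt; nra).
set (D := 2 * (1 + nu * r + s)); set (q := sqrt D).
assert (Hq : 0 < q) by (apply sqrt_lt_R0; unfold D; nra).
assert (Hq2 : q * q = D) by (apply sqrt_sqrt; unfold D; nra).
set (N := 1 - r ^ 2 + s); assert (HN : 0 < N) by (unfold N; nra).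
set (w := sqrt nu); assert (Hw : 1 <= w) by (rewrite <- sqrt_1; apply sqrt_le_1_alt, Hnu).
assert (Hw2 : w * w = nu) by (apply sqrt_sqrt; lra).
(* [N^2 - q^2 = - r^2 (1 - r^2 + 2 s)] is small compared with [q^2 >= 2 nu r]. *)
replace (N / q - 1) with (- (r ^ 2 * (1 - r ^ 2 + 2 * s)) / (q * (N + q)))
  by (field_simplify_eq; [unfold N, D in *; nra | lra]).
assert (Hs_w : s <= 2 * w).
{ apply Rsqr_incr_0_var; [unfold Rsqr; rewrite Hs2 | lra].
  replace (2 * w * (2 * w)) with (4 * nu) by (rewrite <- Hw2; ring).
  assert (nu * r <= nu) by nra; assert (r ^ 2 <= 1) by nra; nra. }
assert (Hr2 : 0 <= r ^ 2 <= 1) by (split; nra).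
assert (HX : 0 <= r ^ 2 * (1 - r ^ 2 + 2 * s) <= 1 + 4 * w).
{ split; [apply Rmult_le_pos; lra|].
  apply Rle_trans with (1 * (1 - r ^ 2 + 2 * s)); [apply Rmult_le_compat_r|]; lra. }
assert (Hden : 2 * r * (w * w) <= q * (N + q)) by (unfold D in Hq2; nra).
unfold Rdiv; rewrite Rabs_mult, Rabs_Ropp, Rabs_inv, !Rabs_right by nra.
apply (Rmult_le_reg_r (q * (N + q))); [nra|].
rewrite Rmult_assoc, Rinv_l, Rmult_1_r by nra.
apply Rle_trans with (5 * w); [lra|].
apply (Rmult_le_reg_l (2 * r * w)); [nra|].
replace (2 * r * w * (5 * / (2 * r * w) * (q * (N + q)))) with (5 * (q * (N + q))) by (field; nra).
nra.
Qed.

Lemma Wratio_lim_p_infty r : 0 < r < 1 -> is_lim (fun nu => Wratio nu r) p_infty 1.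
Proof.
intros Hr; apply is_lim_spec; intros eps; simpl.
pose proof (cond_pos eps) as Heps; set (Q := 5 / (2 * r * eps)).
assert (HQ : 0 < Q) by (apply Rdiv_lt_0_compat; nra).
exists (Rmax 1 (Q ^ 2)); intros nu Hnu.
assert (Hnu1 : 1 <= nu) by (pose proof (Rmax_l 1 (Q ^ 2)); lra).
assert (HQnu : Q < sqrt nu).
{ rewrite <- (sqrt_pow2 Q) by lra; apply sqrt_lt_1_alt; split; [nra|].
  pose proof (Rmax_r 1 (Q ^ 2)); lra. }
eapply Rle_lt_trans; [apply Wratio_sub1_le; assumption|].
apply (Rmult_lt_reg_r (2 * r * sqrt nu)); [nra|].
unfold Rdiv; rewrite Rmult_assoc, Rinv_l, Rmult_1_r by nra.
unfold Q, Rdiv in HQnu.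
apply (Rmult_lt_compat_r (2 * r * eps)) in HQnu; [|nra].
rewrite Rmult_assoc, Rinv_l, Rmult_1_r in HQnu by nra; nra.
Qed.

(** * The superpotentials *)

Section Superpotentials.

Variables (d : nat) (kappa l : R).
Hypotheses (hd : (2 <= d)%nat) (hk : 0 < kappa) (hl : 0 < l).

Let A := - (INR d - 1) / (kappa ^ 2 * l).
Let c := cK d kappa.
Let k := 2 / 3 * c.

Lemma INR_d_ge2 : 2 <= INR d.
Proof. replace 2 with (INR 2) by (simpl; ring); now apply le_INR. Qed.

Lemma cK_sqr : c * c = INR d * kappa ^ 2 / (INR d - 1).
Proof.
pose proof INR_d_ge2; apply sqrt_sqrt.
apply Rlt_le, Rdiv_lt_0_compat; nra.
Qed.

Lemma cK_pos : 0 < c.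
Proof. pose proof INR_d_ge2; apply sqrt_lt_R0, Rdiv_lt_0_compat; nra. Qed.

Lemma Wsup_cosh32 nu phi :
  Wsup d kappa l nu phi = A * (cosh32 (k * phi) * Wratio nu (tanh (k * phi))).
Proof. unfold Wsup, rho; cbv zeta; rewrite inv_Rpower_one_sub_tanh2; unfold A, k, c, Wratio; ring. Qed.

Lemma Winf_cosh32 phi : Winf d kappa l phi = A * cosh32 (k * phi).
Proof. unfold Winf, rho; cbv zeta; now rewrite Rpower_Ropp, inv_Rpower_one_sub_tanh2. Qed.

Lemma Wsup_expansion nu :
  bigO0 (fun phi => Wsup d kappa l nu phi
           - A * (1 + / 6 * psi d kappa phi ^ 2 + / 27 * nu * psi d kappa phi ^ 3))
        (fun phi => psi d kappa phi ^ 4).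
Proof.
pose proof (bigO0_comp_scal_pow k c 4 _ (Rgt_not_eq _ _ cK_pos) (is_jet_cosh32_Wratio nu)) as H.
refine (bigO0_ext _ _ _ _ (bigO0_scal A _ _ H)); intros phi.
rewrite Wsup_cosh32; unfold jet_poly, psi; fold c; unfold k; simpl; field.
Qed.

Lemma Winf_expansion :
  bigO0 (fun phi => Winf d kappa l phi - A * (1 + / 3 * psi d kappa phi ^ 2))
        (fun phi => psi d kappa phi ^ 4).
Proof.
pose proof (bigO0_comp_scal_pow k c 4 _ (Rgt_not_eq _ _ cK_pos) is_jet_cosh32) as H.
refine (bigO0_ext _ _ _ _ (bigO0_scal A _ _ H)); intros phi.
rewrite Winf_cosh32; unfold jet_poly, psi; fold c; unfold k; simpl; field.
Qed.

Lemma A_mul_k2 : A * k ^ 2 = - 4 * INR d / (9 * l).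
Proof.
pose proof INR_d_ge2; unfold A, k.
replace ((2 / 3 * c) ^ 2) with (4 / 9 * (c * c)) by field.
rewrite cK_sqr; field; repeat split; nra.
Qed.

Lemma Wsup_leading nu :
  bigO0 (fun phi => Wsup d kappa l nu phi - (A - Delta_minus d / (2 * l) * phi ^ 2))
        (fun phi => phi ^ 3).
Proof.
pose proof (bigO0_comp_scal_pow k 1 3 _ R1_neq_R0
  (is_jet_leading _ _ (is_jet_cosh32_Wratio nu))) as H.
apply (bigO0_ext_r _ _ _ (fun phi => f_equal (fun y => y ^ 3) (Rmult_1_l phi))) in H.
refine (bigO0_ext _ _ _ _ (bigO0_scal A _ _ H)); intros phi.
rewrite Wsup_cosh32; cbn [jet0 jet1 jet2]; unfold Delta_minus.
set (G := cosh32 (k * phi) * Wratio nu (tanh (k * phi))).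
transitivity (A * G - A - 3 / 8 * (A * k ^ 2) * phi ^ 2); [ring|].
rewrite A_mul_k2; field; lra.
Qed.

Lemma Winf_leading :
  bigO0 (fun phi => Winf d kappa l phi - (A - Delta_plus d / (2 * l) * phi ^ 2))
        (fun phi => phi ^ 3).
Proof.
pose proof (bigO0_comp_scal_pow k 1 3 _ R1_neq_R0 (is_jet_leading _ _ is_jet_cosh32)) as H.
apply (bigO0_ext_r _ _ _ (fun phi => f_equal (fun y => y ^ 3) (Rmult_1_l phi))) in H.
refine (bigO0_ext _ _ _ _ (bigO0_scal A _ _ H)); intros phi.
rewrite Winf_cosh32; cbn [jet0 jet1 jet2]; unfold Delta_plus.
transitivity (A * cosh32 (k * phi) - A - 3 / 4 * (A * k ^ 2) * phi ^ 2); [ring|].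
rewrite A_mul_k2; field; lra.
Qed.

Lemma Wsup_lim_p_infty phi : 0 < phi ->
  is_lim (fun nu => Wsup d kappa l nu phi) p_infty (Winf d kappa l phi).
Proof.
intros Hphi.
assert (Hr : 0 < tanh (k * phi) < 1) by (apply tanh_pos_lt1; pose proof cK_pos; unfold k; nra).
apply (is_lim_ext (fun nu => A * cosh32 (k * phi) * Wratio nu (tanh (k * phi)))).
{ intros nu; rewrite Wsup_cosh32; ring. }
rewrite Winf_cosh32.
replace (Finite (A * cosh32 (k * phi))) with (Rbar_mult (A * cosh32 (k * phi)) 1)
  by (simpl; f_equal; ring).
apply is_lim_scal_l, Wratio_lim_p_infty, Hr.
Qed.

Lemma is_derive_Winf phi :
  is_derive (Winf d kappa l) phi (A * (k * (3 / 2 * sinh (k * phi) * sqrt (cosh (k * phi))))).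
Proof.
apply (is_derive_ext (fun x => A * cosh32 (k * x))); [intros; symmetry; apply Winf_cosh32|].
apply is_derive_scal, (is_derive_comp cosh32 (fun x => k * x)); [apply is_derive_cosh32|].
auto_derive; [exact I | ring].
Qed.

Lemma Winf_superpotential phi :
  Vpot d kappa l phi =
    / 2 * (Derive (Winf d kappa l) phi ^ 2
           - INR d * kappa ^ 2 / (INR d - 1) * Winf d kappa l phi ^ 2).
Proof.
pose proof INR_d_ge2.
rewrite (is_derive_unique _ _ _ (is_derive_Winf phi)), Winf_cosh32.
unfold Vpot, cosh32; fold c k.
pose proof (cosh_pos (k * phi)) as HC; pose proof (cosh2_sub_sinh2 (k * phi)) as CS.
pose proof (sqrt_sqrt _ (Rlt_le _ _ HC)) as Hq.
set (C := cosh (k * phi)) in *; set (S := sinh (k * phi)) in *; set (q := sqrt C) in *.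
transitivity (/ 2 * (A ^ 2 * (k * k * (9 / 4)) * S ^ 2 * (q * q)
  - INR d * kappa ^ 2 / (INR d - 1) * (A ^ 2 * C ^ 2 * (q * q)))); [|field; lra].
rewrite Hq; replace (k * k * (9 / 4)) with (c * c) by (unfold k; field).
rewrite cK_sqr; replace (S ^ 2) with (C ^ 2 - 1) by lra.
unfold A; field; repeat split; nra.
Qed.

End Superpotentials.

Theorem mainTheorem5 (d : nat) (kappa l : R)
  (hd : (2 <= d)%nat) (hk : 0 < kappa) (hl : 0 < l) :
  (forall nu : R, -1 <= nu ->
     bigO0 (fun phi => Wsup d kappa l nu phi
              - (- (INR d - 1) / (kappa ^ 2 * l)
                 * (1 + / 6 * psi d kappa phi ^ 2
                      + / 27 * nu * psi d kappa phi ^ 3)))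
           (fun phi => psi d kappa phi ^ 4)) /\
  (forall phi : R, 0 < phi ->
     is_lim (fun nu => Wsup d kappa l nu phi) p_infty (Winf d kappa l phi)) /\
  (forall phi : R,
     ex_derive (Winf d kappa l) phi /\
     Vpot d kappa l phi =
       / 2 * (Derive (Winf d kappa l) phi ^ 2
              - INR d * kappa ^ 2 / (INR d - 1) * Winf d kappa l phi ^ 2)) /\
  bigO0 (fun phi => Winf d kappa l phi
           - (- (INR d - 1) / (kappa ^ 2 * l) * (1 + / 3 * psi d kappa phi ^ 2)))
        (fun phi => psi d kappa phi ^ 4) /\
  (forall nu : R, -1 <= nu ->
     bigO0 (fun phi => Wsup d kappa l nu phi
              - (- (INR d - 1) / (kappa ^ 2 * l) - Delta_minus d / (2 * l) * phi ^ 2))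
           (fun phi => phi ^ 3)) /\
  bigO0 (fun phi => Winf d kappa l phi
           - (- (INR d - 1) / (kappa ^ 2 * l) - Delta_plus d / (2 * l) * phi ^ 2))
        (fun phi => phi ^ 3).
Proof.
split; [|split; [|split; [|split; [|split]]]].
- intros nu _; now apply Wsup_expansion.
- intros phi; now apply Wsup_lim_p_infty.
- intros phi; split; [eexists; now apply is_derive_Winf | now apply Winf_superpotential].
- now apply Winf_expansion.
- intros nu _; now apply Wsup_leading.
- now apply Winf_leading.
Qed.
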